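(* Let $X=(X_k)$ be a sequence of fuzzy numbers, $0<\beta\le1$, $m\ge0$ an integer, and $\theta=(k_r)$ a lacunary sequence. If $\limsup_r q_r<\infty$, then $S_\theta^\beta(F,\Delta^m)\subset S(F,\Delta^m)$.
   Context: A fuzzy number is a map $X:\mathbb{R}\to[0,1]$ which is normal, fuzzy convex, upper semicontinuous, with compact closure of $\{t:X(t)>0\}$; $L(\mathbb{R})$ is the set of fuzzy numbers. Level sets $[X]^\alpha=\{t:X(t)\ge\alpha\}$ ($\alpha\in(0,1]$), $[X]^0=\overline{\{t:X(t)>0\}}$, are compact intervals $[u^\alpha,v^\alpha]$. Subtraction: $[X-Y]^\alpha=[u_1^\alpha-v_2^\alpha,v_1^\alpha-u_2^\alpha]$. Metric: $d(X,Y)=\sup_{\alpha\in[0,1]}\max\{|u_1^\alpha-u_2^\alpha|,|v_1^\alpha-v_2^\alpha|\}$. $(\Delta^0X)_k=X_k$, $(\Delta^1X)_k=X_k-X_{k+1}$, $(\Delta^mX)_k=(\Delta^1(\Delta^{m-1}X))_k$. A lacunary sequence is an increasing integer sequence $\theta=(k_r)_{r\ge0}$ with $k_0=0$, $h_r=k_r-k_{r-1}\to\infty$; $I_r=(k_{r-1},k_r]$, $q_r=k_r/k_{r-1}$. $S_\theta^\beta(F,\Delta^m)$: sequences $X$ with some $X_0\in L(\mathbb{R})$ such that for all $\varepsilon>0$, $\lim_r\frac{1}{h_r^\beta}|\{k\in I_r:d(\Delta^mX_k,X_0)\ge\varepsilon\}|=0$. $S(F,\Delta^m)$: sequences $X$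 with some $X_0\in L(\mathbb{R})$ such that for all $\varepsilon>0$, $\lim_{n\to\infty}\frac{1}{n}|\{k\le n:d(\Delta^mX_k,X_0)\ge\varepsilon\}|=0$. *)

From Stdlib Require Import Reals Lra ClassicalEpsilon.
From Coquelicot Require Import Coquelicot.
Open Scope R_scope.

Definition closure_R (A : R -> Prop) (t : R) : Prop :=
  forall eps : R, 0 < eps -> exists s, A s /\ Rabs (s - t) < eps.

Definition is_fuzzy_number (X : R -> R) : Prop :=
  (forall t, 0 <= X t <= 1) /\
  (exists t0, X t0 = 1) /\
  (forall s t l, 0 <= l <= 1 -> Rmin (X s) (X t) <= X (l * s + (1 - l) * t)) /\
  (forall t0 eps, 0 < eps ->
     exists delta, 0 < delta /\ forall t, Rabs (t - t0) < delta -> X t < X t0 + eps) /\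
  (* closure of the support {t | X t > 0} is compact, i.e. (Heine-Borel) bounded *)
  (exists M, forall t, closure_R (fun s => 0 < X s) t -> Rabs t <= M).

Definition FN : Type := { X : R -> R | is_fuzzy_number X }.

Definition levelset (X : R -> R) (a : R) (t : R) : Prop :=
  if Rlt_dec 0 a then a <= X t else closure_R (fun s => 0 < X s) t.

Definition lev_lo (X : R -> R) (a : R) : R := real (Glb_Rbar (levelset X a)).
Definition lev_hi (X : R -> R) (a : R) : R := real (Lub_Rbar (levelset X a)).

(** Subtraction: the fuzzy number whose a-level sets are
    [u1^a - v2^a, v1^a - u2^a]; its membership function is reconstructed
    from these level sets as t |-> sup ({0} U {a in (0,1] | t in level a}). *)
Definition fsub (X Y : R -> R) : R -> R := fun t =>
  real (Lub_Rbar (fun a => 0 <= a <= 1 /\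
     (a = 0 \/ (lev_lo X a - lev_hi Y a <= t /\ t <= lev_hi X a - lev_lo Y a)))).

Definition fdist (X Y : R -> R) : R :=
  real (Lub_Rbar (fun x => exists a, 0 <= a <= 1 /\
     x = Rmax (Rabs (lev_lo X a - lev_lo Y a)) (Rabs (lev_hi X a - lev_hi Y a)))).

Fixpoint Delta (m : nat) (X : nat -> R -> R) : nat -> R -> R :=
  match m with
  | O => X
  | S m' => fun k => fsub (Delta m' X k) (Delta m' X (S k))
  end.

(** Number of k in {1,...,n} with P k. *)
Fixpoint count_upto (P : nat -> Prop) (n : nat) : nat :=
  match n with
  | O => O
  | S n' => (count_upto P n' +
             (if excluded_middle_informative (P (S n')) then 1 else 0))%nat
  end.

Definition lacunary (theta : nat -> nat) : Prop :=
  theta O = O /\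
  (forall r, (theta r < theta (S r))%nat) /\
  is_lim_seq (fun r => INR (theta r - theta (r - 1)%nat)) p_infty.

Definition h_r (theta : nat -> nat) (r : nat) : nat := (theta r - theta (r - 1)%nat)%nat.

Definition q_r (theta : nat -> nat) (r : nat) : R := INR (theta r) / INR (theta (r - 1)%nat).

(** |{k in I_r : P k}| with I_r = (k_{r-1}, k_r]. *)
Definition count_Ir (theta : nat -> nat) (P : nat -> Prop) (r : nat) : nat :=
  (count_upto P (theta r) - count_upto P (theta (r - 1)%nat))%nat.

Definition in_S_theta_beta (theta : nat -> nat) (beta : R) (m : nat)
    (X : nat -> FN) : Prop :=
  exists X0 : FN, forall eps, 0 < eps ->
    is_lim_seq (fun r =>
      INR (count_Ir theta
             (fun k => eps <= fdist (Delta m (fun j => proj1_sig (X j)) k) (proj1_sig X0)) r)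
      / Rpower (INR (h_r theta r)) beta) 0.

Definition in_S (m : nat) (X : nat -> FN) : Prop :=
  exists X0 : FN, forall eps, 0 < eps ->
    is_lim_seq (fun n =>
      INR (count_upto
             (fun k => eps <= fdist (Delta m (fun j => proj1_sig (X j)) k) (proj1_sig X0)) n)
      / INR n) 0.

(** Only the counting behind the statistical convergence matters: the theorem
    holds for the set of indices where [Delta^m X] is [eps]-far from [X0], and
    in fact for any set [P] of indices.  Since [h_r >= 1] and [beta <= 1],
    [h_r^beta <= h_r], so [|P ∩ I_r| <= a h_r] eventually, for every [a > 0].
    Summing over blocks, [|P ∩ [1, k_r]| <= K + a k_r], and when [k_{r-1} < n <= k_r]
    the bound [q_r <= H] gives [k_r <= H k_{r-1} < H n], whence
    [|P ∩ [1, n]| / n <= K / n + a H]. *)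
From Stdlib Require Import Reals Lra Lia ClassicalEpsilon.
From Coquelicot Require Import Coquelicot.
Open Scope R_scope.

Lemma count_upto_mono (P : nat -> Prop) (a b : nat) :
  (a <= b)%nat -> (count_upto P a <= count_upto P b)%nat.
Proof.
  induction 1 as [|b _ IH]; [lia|].
  simpl. destruct (excluded_middle_informative _); lia.
Qed.

Lemma Rpower_ratio_bound (c h beta a : R) :
  0 < beta <= 1 -> 1 <= h -> Rabs (c / Rpower h beta) < a -> c <= a * h.
Proof.
  intros Hbeta Hh Hc.
  assert (Hpos : 0 < Rpower h beta) by apply exp_pos.
  assert (Hle : Rpower h beta <= h).
  { rewrite <- (Rpower_1 h) at 2 by lra. apply Rle_Rpower; lra. }
  assert (Hlt : c < a * Rpower h beta).
  { apply Rlt_div_l; [lra|]. exact (Rle_lt_trans _ _ _ (Rle_abs _) Hc). }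
  assert (0 <= a) by (apply Rle_trans with (Rabs (c / Rpower h beta)); [apply Rabs_pos | lra]).
  assert (a * Rpower h beta <= a * h) by (apply Rmult_le_compat_l; lra).
  lra.
Qed.

Lemma LimSup_seq_lt_p_infty_bound (u : nat -> R) :
  Rbar_lt (LimSup_seq u) p_infty ->
  exists H N, 0 < H /\ forall n, (N <= n)%nat -> u n <= H.
Proof.
  intros Hfin. destruct (ex_LimSup_seq u) as [l Hl].
  rewrite (is_LimSup_seq_unique _ _ Hl) in Hfin.
  destruct l as [l| |]; simpl in Hfin; [|contradiction|].
  - destruct (Hl (mkposreal 1 Rlt_0_1)) as [_ [N HN]].
    exists (Rmax 1 (l + 1)), N. split; [apply Rlt_le_trans with 1; [lra | apply Rmax_l]|].
    intros n Hn. specialize (HN n Hn). simpl in HN.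
    assert (Hmax := Rmax_r 1 (l + 1)). lra.
  - destruct (Hl 1) as [N HN]. exists 1, N. split; [lra|].
    intros n Hn. specialize (HN n Hn). lra.
Qed.

Section StrictlyIncreasing.

Variable theta : nat -> nat.
Hypothesis theta_incr : forall r, (theta r < theta (S r))%nat.

Lemma theta_mono (a b : nat) : (a <= b)%nat -> (theta a <= theta b)%nat.
Proof. induction 1 as [|b _ IH]; [lia|]. specialize (theta_incr b). lia. Qed.

Lemma h_r_ge1 (r : nat) : (1 <= r)%nat -> (1 <= h_r theta r)%nat.
Proof.
  intros Hr. unfold h_r. specialize (theta_incr (r - 1)).
  replace (S (r - 1)) with r in theta_incr by lia. lia.
Qed.

Lemma count_theta_telescope (P : nat -> Prop) (a : R) (N : nat) :
  (forall r, (N < r)%nat -> INR (count_Ir theta P r) <= a * INR (h_r theta r)) ->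
  forall r, (N <= r)%nat ->
  INR (count_upto P (theta r))
    <= INR (count_upto P (theta N)) + a * (INR (theta r) - INR (theta N)).
Proof.
  intros Hblock r. induction 1 as [|r Hr IH]; [lra|].
  specialize (Hblock (S r) ltac:(lia)).
  unfold count_Ir, h_r in Hblock. replace (S r - 1)%nat with r in Hblock by lia.
  assert (Hstep := theta_incr r).
  assert (Hcount := count_upto_mono P _ _ (Nat.lt_le_incl _ _ Hstep)).
  rewrite !minus_INR in Hblock by lia. lra.
Qed.

Lemma count_Ir_small_of_beta_density (P : nat -> Prop) (beta : R) :
  0 < beta <= 1 ->
  is_lim_seq (fun r => INR (count_Ir theta P r) / Rpower (INR (h_r theta r)) beta) 0 ->
  forall a, 0 < a ->
  exists N, forall r, (N < r)%nat -> INR (count_Ir theta P r) <= a * INR (h_r theta r).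
Proof.
  intros Hbeta Hlim a Ha.
  apply is_lim_seq_spec in Hlim. destruct (Hlim (mkposreal a Ha)) as [N HN].
  exists N. intros r Hr.
  apply Rpower_ratio_bound with beta; [assumption| |].
  - rewrite <- INR_1. apply le_INR, h_r_ge1. lia.
  - specialize (HN r ltac:(lia)). simpl in HN. rewrite Rminus_0_r in HN. exact HN.
Qed.

Hypothesis theta0 : theta O = O.

Lemma le_theta (r : nat) : (r <= theta r)%nat.
Proof. induction r as [|r IH]; [lia|]. specialize (theta_incr r). lia. Qed.

Lemma theta_bracket (n : nat) :
  (1 <= n)%nat ->
  exists r, (1 <= r)%nat /\ (theta (r - 1) < n)%nat /\ (n <= theta r)%nat.
Proof.
  intros Hn. assert (Hcover := le_theta n). revert Hcover.
  induction n as [|r IH] at 2; intros Hcover; [lia|].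
  destruct (Nat.le_gt_cases n (theta r)) as [Hle|Hgt]; [now apply IH|].
  exists (S r). replace (S r - 1)%nat with r by lia. lia.
Qed.

Lemma count_upto_linear_bound (P : nat -> Prop) (a H : R) (N R0 : nat) :
  0 <= a ->
  (forall r, (R0 <= r)%nat -> q_r theta r <= H) ->
  (forall r, (N < r)%nat -> INR (count_Ir theta P r) <= a * INR (h_r theta r)) ->
  forall n, (theta (N + R0 + 1) < n)%nat ->
  INR (count_upto P n) <= INR (count_upto P (theta N)) + a * H * INR n.
Proof.
  intros Ha Hq Hblock n Hn.
  destruct (theta_bracket n ltac:(lia)) as [r [Hr1 [Hlo Hhi]]].
  assert (HrN : (N + R0 + 1 < r)%nat).
  { destruct (Nat.le_gt_cases r (N + R0 + 1)) as [Hle|]; [|assumption].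
    assert (Hm := theta_mono _ _ Hle). lia. }
  assert (Hprev : 0 < INR (theta (r - 1))).
  { apply lt_0_INR. assert (Hge := le_theta (r - 1)). lia. }
  assert (Hgrowth : INR (theta r) <= H * INR (theta (r - 1))).
  { apply Rle_div_l; [lra|]. apply Hq. lia. }
  assert (Htele := count_theta_telescope P a N Hblock r ltac:(lia)).
  assert (Hmono := le_INR _ _ (count_upto_mono P _ _ Hhi)).
  apply lt_INR in Hlo.
  assert (HtN := pos_INR (theta N)).
  assert (Htr := pos_INR (theta r)).
  assert (a * INR (theta r) <= a * H * INR n).
  { rewrite Rmult_assoc. apply Rmult_le_compat_l; [assumption|].
    assert (0 <= H) by (apply Rmult_le_reg_r with (INR (theta (r - 1))); lra).
    assert (H * INR (theta (r - 1)) <= H * INR n) by (apply Rmult_le_compat_l; lra).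
    lra. }
  assert (a * INR (theta N) >= 0) by (apply Rle_ge, Rmult_le_pos; lra).
  lra.
Qed.

Lemma density_zero_of_block_density_zero (P : nat -> Prop) (H : R) (R0 : nat) :
  0 < H ->
  (forall r, (R0 <= r)%nat -> q_r theta r <= H) ->
  (forall a, 0 < a -> exists N, forall r, (N < r)%nat ->
     INR (count_Ir theta P r) <= a * INR (h_r theta r)) ->
  is_lim_seq (fun n => INR (count_upto P n) / INR n) 0.
Proof.
  intros HH Hq Hblock. apply is_lim_seq_spec. intros e.
  assert (Ha : 0 < e / (2 * H)) by (apply Rdiv_lt_0_compat; [apply cond_pos | lra]).
  destruct (Hblock _ Ha) as [N HN].
  set (K := INR (count_upto P (theta N))).
  assert (HK : is_lim_seq (fun n => K / INR n) 0).
  { replace (Finite 0) with (Rbar_mult K (Rbar_inv p_infty)) by (simpl; f_equal; ring).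
    apply is_lim_seq_scal_l, is_lim_seq_inv; [apply is_lim_seq_INR | discriminate]. }
  apply is_lim_seq_spec in HK.
  destruct (HK (pos_div_2 e)) as [N' HN']. simpl in HN'.
  exists (N' + S (theta (N + R0 + 1)))%nat. intros n Hn.
  specialize (HN' n ltac:(lia)). rewrite Rminus_0_r, Rabs_pos_eq in HN'
    by (apply Rdiv_le_0_compat; [apply pos_INR | apply lt_0_INR; lia]).
  assert (Hbound := count_upto_linear_bound P _ _ N R0 (Rlt_le _ _ Ha) Hq HN n ltac:(lia)).
  replace (e / (2 * H) * H) with (e / 2) in Hbound by (field; lra).
  assert (Hn0 : 0 < INR n) by (apply lt_0_INR; lia).
  rewrite Rminus_0_r, Rabs_pos_eq by (apply Rdiv_le_0_compat; [apply pos_INR | lra]).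
  apply Rle_lt_trans with (K / INR n + e / 2); [|lra].
  apply Rle_div_l; [lra|].
  replace ((K / INR n + e / 2) * INR n) with (K + e / 2 * INR n) by (field; lra).
  exact Hbound.
Qed.

End StrictlyIncreasing.

Theorem theorem2p11 (theta : nat -> nat) (beta : R) (m : nat) :
  0 < beta <= 1 ->
  lacunary theta ->
  Rbar_lt (LimSup_seq (q_r theta)) p_infty ->
  forall X : nat -> FN, in_S_theta_beta theta beta m X -> in_S m X.
Proof.
  intros Hbeta [Htheta0 [Hincr _]] Hq X [X0 HX]. exists X0. intros eps Heps.
  destruct (LimSup_seq_lt_p_infty_bound _ Hq) as [H [R0 [HH HqH]]].
  apply (density_zero_of_block_density_zero theta Hincr Htheta0 _ H R0 HH HqH).
  exact (count_Ir_small_of_beta_density theta Hincr _ beta Hbeta (HX eps Heps)).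
Qed.
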